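(* Let $G$ be a finite nonabelian group and suppose $Z_2=Z(G)$, where $Z_2/Z(G)=Z(G/Z(G))$. Then: (1) $K(G)$ is the intersection of all noncentral normal subgroups of $G$ (i.e. normal subgroups not contained in $Z(G)$); (2) $K(G)\not\le Z(G)$ if and only if $G$ has a unique subgroup $N$ that is minimal among the noncentral normal subgroups of $G$.
   Context: All groups are finite. For $\chi\in\mathrm{Irr}(G)$, the center of $\chi$ is $Z(\chi)=\{g\in G : |\chi(g)|=\chi(1)\}$; equivalently $Z(\chi)/\ker(\chi)=Z(G/\ker(\chi))$. For a nonabelian group $G$, let $\mathcal{X}=\{\chi\in\mathrm{Irr}(G) : Z(\chi)>Z(G)\}$ (strict containment) and define $K(G)=\bigcap_{\chi\in\mathcal{X}}\ker(\chi)$. If $G$ is abelian, set $K(G)=G$. *)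

From mathcomp Require Import all_boot all_order all_algebra all_fingroup all_solvable all_field all_character.
Set Implicit Arguments. Unset Strict Implicit. Unset Printing Implicit Defensive.
Import GroupScope.
Local Open Scope group_scope.

(* X = irreducible characters chi with Z(G) < Z(chi) (strict containment);
   K(G) = intersection of their kernels (= G if abelian; intersection taken
   inside G so that the empty intersection is G). *)
Definition Kgrp (gT : finGroupType) (G : {group gT}) : {set gT} :=
  if abelian G then G
  else G :&: \bigcap_(i : Iirr G | 'Z(G) \proper ('Z(('chi[G]_i)%R))%CF) cfker ('chi[G]_i)%R.

Definition noncentral_normal (gT : finGroupType) (G N : {group gT}) : bool :=
  (N <| G) && ~~ (N \subset 'Z(G)).

Definition min_noncentral_normal (gT : finGroupType) (G N : {group gT}) : Prop :=
  noncentral_normal G N /\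
  forall M : {group gT}, noncentral_normal G M -> M \subset N -> M :=: N.

(* The condition Z(G) < Z(chi) singles out exactly the irreducible characters
   whose kernel is noncentral: [Z(chi), G] <= ker chi, so a central kernel
   would force Z(chi) <= Z_2(G) = Z(G); conversely ker chi <= Z(chi).  Since
   every normal subgroup is the intersection of the kernels containing it,
   K(G) is the intersection of all noncentral normal subgroups, and such an
   intersection is noncentral exactly when it is the unique minimal one. *)

From mathcomp Require Import all_boot all_order all_algebra all_fingroup all_solvable all_field all_character.
Set Implicit Arguments.
Unset Strict Implicit.
Unset Printing Implicit Defensive.
Import GroupScope.
Local Open Scope group_scope.

Section UpperCentral.

Variables (gT : finGroupType) (G : {group gT}).

Lemma ucnS_of_comm n (H : {set gT}) :
  H \subset G -> [~: H, G] \subset 'Z_n(G) -> H \subset 'Z_n.+1(G).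
Proof.
move=> sHG sHGZ; apply/subsetP=> x Hx.
rewrite ucnSnR inE (subsetP sHG) //=.
by apply: subset_trans sHGZ; rewrite commSg ?sub1set.
Qed.

End UpperCentral.

Section CharacterCenter.

Variables (gT : finGroupType) (G : {group gT}).

Lemma cfcenter_comm_sub_cfker (phi : 'CF(G)) :
  [~: 'Z(phi)%CF, G] \subset cfker phi.
Proof.
have nKG := normal_norm (cfker_normal phi).
rewrite -quotient_cents2 ?(subset_trans (cfcenter_sub _)) //.
exact: subset_trans (cfcenter_subset_center _) (subsetIr _ _).
Qed.

Lemma cfcenter_sub_ucn2 (phi : 'CF(G)) :
  cfker phi \subset 'Z(G) -> 'Z(phi)%CF \subset 'Z_2(G).
Proof.
move=> sKZ; apply: ucnS_of_comm; first exact: cfcenter_sub.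
by rewrite ucn1; apply: subset_trans sKZ; apply: cfcenter_comm_sub_cfker.
Qed.

Lemma center_proper_cfcenter_irr (i : Iirr G) :
  ~~ (cfker ('chi_i)%R \subset 'Z(G)) -> 'Z(G) \proper 'Z(('chi_i)%R)%CF.
Proof.
move=> nKZ; rewrite properE -cap_cfcenter_irr (bigcap_inf i) //=.
rewrite cap_cfcenter_irr; apply: contra nKZ.
exact: subset_trans (normal_sub (cfker_center_normal _)).
Qed.

Lemma center_proper_cfcenter_irrE (i : Iirr G) : 'Z_2(G) = 'Z(G) ->
  ('Z(G) \proper 'Z(('chi_i)%R)%CF) = ~~ (cfker ('chi_i)%R \subset 'Z(G)).
Proof.
move=> Z2G; apply/idP/idP; last exact: center_proper_cfcenter_irr.
case/properP=> _ [x Zx notZx]; apply: contra notZx => sKZ.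
by rewrite -Z2G (subsetP (cfcenter_sub_ucn2 sKZ)).
Qed.

End CharacterCenter.

Section NoncentralCore.

Variables (gT : finGroupType) (G : {group gT}).

Definition noncentral_core : {set gT} :=
  G :&: \bigcap_(N : {group gT} | noncentral_normal G N) N.

Lemma noncentral_core_sub (N : {group gT}) :
  noncentral_normal G N -> noncentral_core \subset N.
Proof. by move=> ncN; rewrite subIset // (bigcap_inf N) ?orbT. Qed.

Lemma noncentral_core_normal : noncentral_core <| G.
Proof.
rewrite /normal subsetIl normsI ?normG //.
by apply/norms_bigcap/bigcapsP=> N /andP[/andP[]].
Qed.

Lemma cap_noncentral_cfker :
  G :&: \bigcap_(i | ~~ (cfker ('chi[G]_i)%R \subset 'Z(G))) cfker ('chi[G]_i)%R
    = noncentral_core.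
Proof.
apply/eqP; rewrite eqEsubset !subsetI !subsetIl /=; apply/andP; split.
  apply/bigcapsP=> N /andP[nsNG nNZ]; rewrite -(cap_cfker_normal nsNG).
  apply/bigcapsP=> i sNK; rewrite subIset // (bigcap_inf i) ?orbT //.
  by apply: contra nNZ; apply: subset_trans.
apply/bigcapsP=> i nKZ; rewrite subIset // orbC.
rewrite (bigcap_inf [group of cfker ('chi[G]_i)%R]) //.
by rewrite /noncentral_normal cfker_normal.
Qed.

Lemma unique_min_noncentral_normal_sub (N0 N : {group gT}) :
  (forall M : {group gT}, min_noncentral_normal G M -> N0 = M) ->
  noncentral_normal G N -> N0 \subset N.
Proof.
move=> uniqN0 ncN.
have [M /mingroupP[/andP[ncM sMN] minM] _] :=
  @mingroup_exists gT (fun M => noncentral_normal G M && (M \subset N)) N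
    (introT andP (conj ncN (subxx _))).
rewrite (uniqN0 M) //; split=> // L ncL sLM; apply: minM => //.
by rewrite ncL (subset_trans sLM sMN).
Qed.

Lemma noncentral_coreP :
  ~~ (noncentral_core \subset 'Z(G)) <->
  exists! N : {group gT}, min_noncentral_normal G N.
Proof.
split=> [nCZ | [N0 [[ncN0 _] uniqN0]]].
  have ncC : noncentral_normal G [group of noncentral_core].
    by rewrite /noncentral_normal noncentral_core_normal.
  exists [group of noncentral_core]; split.
    split=> // M ncM sMC; apply/eqP; rewrite eqEsubset sMC.
    exact: noncentral_core_sub.
  by move=> N [ncN minN]; apply/val_inj/minN=> //; apply: noncentral_core_sub.
case/andP: ncN0 => nsN0G; apply: contra; apply: subset_trans.
rewrite subsetI (normal_sub nsN0G); apply/bigcapsP=> N ncN.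
exact: unique_min_noncentral_normal_sub uniqN0 ncN.
Qed.

End NoncentralCore.

Lemma Kgrp_noncentral_core (gT : finGroupType) (G : {group gT}) :
  ~~ abelian G -> 'Z_2(G) = 'Z(G) -> Kgrp G = noncentral_core G.
Proof.
move=> nabG Z2G; rewrite /Kgrp (negbTE nabG) -cap_noncentral_cfker.
apply: (congr1 (setI G)); apply: eq_bigl => i.
exact: center_proper_cfcenter_irrE.
Qed.

Theorem theoremB (gT : finGroupType) (G : {group gT}) :
  ~~ abelian G -> 'Z_2(G) = 'Z(G) ->
  (Kgrp G = G :&: \bigcap_(N : {group gT} | noncentral_normal G N) N) /\
  (~~ (Kgrp G \subset 'Z(G)) <->
     exists! N : {group gT}, min_noncentral_normal G N).
Proof.
move=> nabG Z2G; rewrite Kgrp_noncentral_core //.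
by split; last exact: noncentral_coreP.
Qed.
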